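(* Let $X$ and $U$ be Hilbert spaces, let $A:D(A)\subset X\to X$ generate a $C_0$ semigroup $\{S(t);t\geq0\}$ on $X$ with $\|S(t)\|_{\mathcal L(X,X)}\leq Me^{\alpha t}$ for all $t\geq0$, where $M>0$ and $\alpha\geq0$ are constants. Let $B\in\mathcal L(X,U)$. Suppose there are positive constants $d,k$ and a nondecreasing function $\theta:[0,\infty)\to[0,\infty)$ such that $$\|S(L)u_0\|_X\leq\theta(L)e^{\frac{d}{L^k}}\Big(\int_0^L\|BS(t)u_0\|_U^2\,dt\Big)^{1/2}\quad\text{for all }L>0\text{ and }u_0\in X.$$ Then there exists a positive constant $N=N(d,k)$ such that $$\|S(T)u_0\|_X\leq F(T)e^{\frac{N}{T^k}}\int_0^T\|BS(t)u_0\|_U\,dt\quad\text{for all }T>0\text{ and }u_0\in X,$$ where $F(T)=\theta(T)^2\|B\|_{\mathcal L(X,U)}Me^{\alpha T}$ for $T>0$. *)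

From HB Require Import structures.
From mathcomp Require Import all_boot all_order all_algebra.
From mathcomp Require Import all_classical all_reals all_analysis.
Set Implicit Arguments. Unset Strict Implicit. Unset Printing Implicit Defensive.
Import Order.TTheory GRing.Theory Num.Theory.
Import numFieldNormedType.Exports.
Local Open Scope classical_set_scope.
Local Open Scope ring_scope.

Definition hilbert_space (R : realType) (V : completeNormedModType R) : Prop :=
  exists ip : V -> V -> R,
    (forall x y, ip x y = ip y x) /\
    (forall (a : R) (x y z : V), ip (a *: x + y) z = a * ip x z + ip y z) /\
    (forall x, ip x x = `|x| ^+ 2).

Definition is_linear (R : realType) (V W : normedModType R) (f : V -> W) : Prop :=
  forall (a : R) (x y : V), f (a *: x + y) = a *: f x + f y.

Definition bounded_linear (R : realType) (V W : normedModType R) (f : V -> W) : Prop :=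
  is_linear f /\ continuous f.

Definition opnorm (R : realType) (V W : normedModType R) (f : V -> W) : R :=
  sup [set `|f x| | x in [set x : V | `|x| <= 1]].

Definition C0_semigroup (R : realType) (V : normedModType R) (S : R -> V -> V) : Prop :=
  (forall t, 0 <= t -> bounded_linear (S t)) /\
  (forall x, S 0 x = x) /\
  (forall t s x, 0 <= t -> 0 <= s -> S (t + s) x = S t (S s x)) /\
  (forall x, (fun t => S t x) @ 0^'+ --> x).

From HB Require Import structures.
From mathcomp Require Import all_boot all_order all_algebra.
From mathcomp Require Import all_classical all_reals all_analysis.
From mathcomp Require Import lra ring.
Import Order.TTheory GRing.Theory Num.Theory.
Import numFieldNormedType.Exports.
Local Open Scope classical_set_scope.
Local Open Scope ring_scope.
Set Implicit Arguments. Unset Strict Implicit.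

(* Let [t_m = T r^m] with [r^k = 2/3] and [K = |B| M e^(alpha T)].  Since
   [|B (S t v)| <= K |v|] for [t <= T], the squared L^2 norm of the observation
   of [S t_(m+1) u] on [[0, t_m - t_(m+1)]] is at most [K |S t_(m+1) u| G], where
   [G] is the L^1 norm of the observation of [u] on [[0, T]].  The observability
   inequality and Young's inequality then give
     [2 |S t_m u| <= e^(-2 nu_m) |S t_(m+1) u| + theta(T)^2 K G e^(4 nu_m)]
   with [nu_m = d / (t_m - t_(m+1))^k] growing by the factor 3/2.  Weighted by
   [e^(4 (nu_0 - nu_m)) / 2^m] these inequalities telescope, and the remainder
   vanishes since the orbit is bounded on [[0, T]]. *)

Section LinearMaps.
Variables (R : realType) (V W : normedModType R) (f : V -> W).

Section Linear.
Hypothesis lin_f : is_linear f.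

Lemma is_linear0 : f 0 = 0.
Proof.
have := lin_f 1 0 0; rewrite !scale1r addr0.
by move=> /(congr1 (fun z => z - f 0)); rewrite subrr addrK => <-.
Qed.

Lemma is_linearZ a x : f (a *: x) = a *: f x.
Proof. by have := lin_f a x 0; rewrite !addr0 is_linear0 addr0. Qed.

Lemma is_linearB x y : f (x - y) = f x - f y.
Proof. by have := lin_f (-1) y x; rewrite !scaleN1r addrC => ->; rewrite addrC. Qed.

End Linear.

Section Bounded.
Hypothesis bf : bounded_linear f.

(* Continuity at 0 gives a ball of radius e mapped into the unit ball, so by
   homogeneity the unit ball is mapped into the ball of radius 2 / e. *)
Lemma opnorm_has_ubound : has_ubound [set `|f x| | x in [set x : V | `|x| <= 1]].
Proof.
case: bf => lin_f cont_f.
have := cont_f 0; rewrite /continuous_at (is_linear0 lin_f) => /cvgrPdist_le.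
move=> /(_ 1 ltr01) /nbhs_ballP [/= e e0 He].
have e2 : 0 <= e / 2 by rewrite divr_ge0 // ltW.
exists (2 / e) => _ [y /= y1 <-].
have : ball (0 : V) e ((e / 2) *: y).
  rewrite -ball_normE /ball_ /= sub0r normrN normrZ (ger0_norm e2).
  apply: (@le_lt_trans _ _ (e / 2)); first by rewrite ler_piMr.
  by rewrite ltr_pdivrMr // ltr_pMr // ltr1n.
move=> /He /=; rewrite sub0r normrN is_linearZ // normrZ (ger0_norm e2) => fy.
rewrite ler_pdivlMr //; lra.
Qed.

Lemma opnorm_ge0 : 0 <= opnorm f.
Proof.
apply: le_trans (ub_le_sup opnorm_has_ubound _); last first.
  by exists 0 => //=; rewrite normr0 ler01.
by rewrite is_linear0 ?normr0 //; case: bf.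
Qed.

Lemma ler_opnorm x : `|f x| <= opnorm f * `|x|.
Proof.
have lin_f : is_linear f by case: bf.
have [->|x0] := eqVneq x 0; first by rewrite is_linear0 // !normr0 mulr0.
have nx : 0 < `|x| by rewrite normr_gt0.
have nxV : 0 <= `|x|^-1 by rewrite invr_ge0 ltW.
have : `|f (`|x|^-1 *: x)| <= opnorm f.
  apply: (ub_le_sup opnorm_has_ubound); exists (`|x|^-1 *: x) => //=.
  by rewrite normrZ (ger0_norm nxV) mulVf // normr_eq0.
by rewrite is_linearZ // normrZ (ger0_norm nxV) mulrC ler_pdivrMr.
Qed.

End Bounded.
End LinearMaps.

Section IntervalIntegrals.
Variable R : realType.
Implicit Types (f : R -> R) (a b : R).

Lemma continuous_itv_integrable f a b : {within `[a, b], continuous f} ->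
  lebesgue_measure.-integrable `[a, b] (EFin \o f).
Proof.
by move=> cf; apply: continuous_compact_integrable => //; apply: segment_compact.
Qed.

Lemma Rintegral_itv_shift f a L : 0 <= L -> {within `[a, L + a], continuous f} ->
  \int[lebesgue_measure]_(t in `[0, L]) f (t + a) =
  \int[lebesgue_measure]_(t in `[a, L + a]) f t.
Proof.
move=> L0 cf; pose F t : R := t + a.
have dF : derive1 F = cst 1.
  by apply/funext => x; rewrite derive1E deriveD // derive_id derive_cst addr0.
have cF : continuous F by move=> x; apply: cvgD; [exact: cvg_id | exact: cvg_cst].
have := @integration_by_substitution_increasing R F f 0 L L0.
rewrite /F /= add0r => h; rewrite /Rintegral h ?dF //.
- congr fine; apply: eq_integral => x _ /=; rewrite !fctE /= mulr1 //.
- by move=> x y _ _ xy; rewrite ltrD2r.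
- by move=> x _; exact: cst_continuous.
- exact: is_cvg_cst.
- exact: is_cvg_cst.
- split.
  + by move=> x _; apply: derivableD => //; exact: derivable_id.
  + exact: cvg_at_right_filter (cF 0).
  + exact: cvg_at_left_filter (cF L).
Qed.

Lemma le_Rintegral_subitv f a b c e :
  {within `[c, e], continuous f} -> (forall x, c <= x <= e -> 0 <= f x) ->
  c <= a -> b <= e ->
  \int[lebesgue_measure]_(x in `[a, b]) f x <= \int[lebesgue_measure]_(x in `[c, e]) f x.
Proof.
move=> cf f0 ca be.
have sub : `[a, b] `<=` `[c, e] by apply: subset_itv; rewrite bnd_simp.
have ice := continuous_itv_integrable cf.
have iab : lebesgue_measure.-integrable `[a, b] (EFin \o f) by exact: integrableS ice.
rewrite /Rintegral fine_le //; try exact: integrable_fin_num.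
apply: ge0_subset_integral => //; first exact: measurable_int ice.
Qed.

Lemma le_Rintegral_sqr f a b c : {within `[a, b], continuous f} ->
  (forall x, a <= x <= b -> 0 <= f x <= c) ->
  \int[lebesgue_measure]_(x in `[a, b]) f x ^+ 2 <=
  c * \int[lebesgue_measure]_(x in `[a, b]) f x.
Proof.
move=> cf fc; rewrite -RintegralZl //; last exact: continuous_itv_integrable.
apply: le_Rintegral => //.
- apply: continuous_itv_integrable.
  apply: (within_continuous_comp _ _ (fun y : R => y ^+ 2) _ cf) => y _.
  exact: exprn_continuous.
- apply: continuous_itv_integrable.
  apply: (within_continuous_comp _ _ (fun y : R => c * y) _ cf) => y _.
  by apply: continuousM => //; exact: cst_continuous.
- move=> x; rewrite /= in_itv /= => /fc /andP[f0 fle].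
  by rewrite expr2 ler_wpM2r.
Qed.

End IntervalIntegrals.

Lemma sqrtrM_le_mean (R : rcfType) (x y : R) : 0 <= x -> 0 <= y ->
  Num.sqrt (x * y) <= (x + y) / 2.
Proof.
move=> x0 y0; have m0 : 0 <= (x + y) / 2 by rewrite divr_ge0 ?addr_ge0.
rewrite -(ger0_norm m0) -sqrtr_sqr ler_sqrt ?sqr_ge0 //.
have := sqr_ge0 (x - y); rewrite !expr2; nra.
Qed.

Lemma young_expR (R : realType) (th K E G y : R) :
  0 <= th -> 0 <= K -> 0 <= E -> 0 <= G ->
  th * expR y * Num.sqrt (K * E * G) <=
  (expR (- (2 * y)) * E + th ^+ 2 * K * G * expR (4 * y)) / 2.
Proof.
move=> th0 K0 E0 G0.
have -> : th * expR y * Num.sqrt (K * E * G) =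
    Num.sqrt (expR (- (2 * y)) * E * (th ^+ 2 * K * G * expR (4 * y))).
  have e2 : expR (- (2 * y)) * expR (4 * y) = expR y ^+ 2.
    by rewrite -expRD expr2 -expRD; congr expR; ring.
  have -> : expR (- (2 * y)) * E * (th ^+ 2 * K * G * expR (4 * y)) =
      (th * expR y) ^+ 2 * (K * E * G) by rewrite exprMn -e2; ring.
  by rewrite [RHS]sqrtrM ?sqr_ge0 // sqrtr_sqr ger0_norm // mulr_ge0 ?expR_ge0.
by apply: sqrtrM_le_mean; rewrite !mulr_ge0 ?expR_ge0 ?sqr_ge0.
Qed.

Lemma exists_powR_root (R : realType) (c k : R) : 0 < c < 1 -> 0 < k ->
  exists2 r : R, 0 < r < 1 & r `^ k = c.
Proof.
move=> /andP[c0 c1] k0; exists (expR (ln c / k)); first rewrite expR_gt0 /=.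
  by rewrite expR_lt1 pmulr_llt0 ?invr_gt0 // ln_lt0 // c0.
by rewrite /powR gt_eqF ?expR_gt0 // expRK mulrC divfK ?gt_eqF // lnK.
Qed.

Lemma le_halving_tail (R : archiFieldType) (x y D : R) : 0 <= D ->
  (forall m, x <= y + D / 2 ^+ m) -> x <= y.
Proof.
move=> D0 le_xy; apply/ler_addgt0Pr => e e0.
pose m := Num.Def.archi_bound (D / e).
have m_gt : D / e < m%:R by apply: archi_boundP; rewrite divr_ge0 // ltW.
have m_le : (m%:R : R) <= 2 ^+ m by rewrite -natrX ler_nat ltnW // ltn_expl.
apply: le_trans (le_xy m) _; rewrite lerD2l ler_pdivrMr ?exprn_gt0 //.
by rewrite -ler_pdivrMl // mulrC ltW // (lt_le_trans m_gt m_le).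
Qed.

Section GeometricRecursion.
Variables (R : realType) (f nu : nat -> R) (P : R).
Hypothesis nuS : forall m, nu m.+1 = 3 / 2 * nu m.
Hypothesis f_rec : forall m,
  f m <= (expR (- (2 * nu m)) * f m.+1 + P * expR (4 * nu m)) / 2.

(* The weight [w m] satisfies [w m.+1 = w m * expR (- (2 * nu m)) / 2], so
   multiplying the m-th inequality by [w m] telescopes. *)
Lemma geometric_recursion_telescope m :
  f 0 + P * expR (4 * nu 0) / 2 ^+ m <=
  expR (4 * (nu 0 - nu m)) / 2 ^+ m * f m + P * expR (4 * nu 0).
Proof.
set E := P * expR (4 * nu 0); pose w n := expR (4 * (nu 0 - nu n)) / 2 ^+ n.
change (f 0 + E / 2 ^+ m <= w m * f m + E).
have wS n : w n.+1 = w n * expR (- (2 * nu n)) / 2.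
  rewrite /w (_ : 4 * (nu 0 - nu n.+1) = 4 * (nu 0 - nu n) + - (2 * nu n)).
    by rewrite expRD exprS invfM; ring.
  by rewrite nuS; field.
have wE n : w n * expR (4 * nu n) = expR (4 * nu 0) / 2 ^+ n.
  by rewrite /w mulrAC -expRD; congr (expR _ / _); ring.
elim: m => [|m IH]; first by rewrite /w subrr mulr0 expR0 !expr0 !divr1 mul1r addrC.
have w_ge0 : 0 <= w m by rewrite divr_ge0 ?expR_ge0 ?exprn_ge0.
have step : w m * f m <= w m.+1 * f m.+1 + E / 2 ^+ m.+1.
  have -> : E / 2 ^+ m.+1 = P * (w m * expR (4 * nu m)) / 2.
    by rewrite wE /E exprS invfM; ring.
  have -> : w m.+1 * f m.+1 + P * (w m * expR (4 * nu m)) / 2 =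
      w m * ((expR (- (2 * nu m)) * f m.+1 + P * expR (4 * nu m)) / 2).
    by rewrite wS; ring.
  exact: ler_wpM2l.
have half : E / 2 ^+ m = E / 2 ^+ m.+1 + E / 2 ^+ m.+1.
  by rewrite exprS invfM; field.
move: IH step; rewrite half; lra.
Qed.

Lemma le_geometric_recursion D : 0 <= nu 0 -> 0 <= P -> (forall m, 0 <= f m <= D) ->
  f 0 <= P * expR (4 * nu 0).
Proof.
move=> nu0 P0 f_bdd.
have D0 : 0 <= D by case/andP: (f_bdd 0) => /le_trans; apply.
apply: (le_halving_tail D0) => m.
have nu_ge : nu 0 <= nu m by elim: m => // m IH; rewrite nuS; lra.
have E_ge0 : 0 <= P * expR (4 * nu 0) / 2 ^+ m.
  by rewrite divr_ge0 ?mulr_ge0 ?expR_ge0 ?exprn_ge0.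
have w_le : expR (4 * (nu 0 - nu m)) / 2 ^+ m <= (2 ^+ m)^-1.
  apply: ler_piMl; first by rewrite invr_ge0 exprn_ge0.
  by rewrite expR_le1 pmulr_rle0 // subr_le0.
have wf_le : expR (4 * (nu 0 - nu m)) / 2 ^+ m * f m <= D / 2 ^+ m.
  case/andP: (f_bdd m) => fm0 fmD; rewrite mulrC.
  by apply: le_trans (ler_wpM2l fm0 w_le) _; rewrite ler_wpM2r ?invr_ge0 ?exprn_ge0.
have := geometric_recursion_telescope m; lra.
Qed.

End GeometricRecursion.

Section Semigroup.
Variables (R : realType) (X : normedModType R) (S : R -> X -> X) (M alpha : R).
Hypothesis S_C0 : C0_semigroup S.
Hypothesis M_gt0 : 0 < M.
Hypothesis alpha_ge0 : 0 <= alpha.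
Hypothesis S_growth : forall t, 0 <= t -> opnorm (S t) <= M * expR (alpha * t).
Implicit Types (a b h s t L T : R) (u x : X).

Lemma semigroup_growth_le s t : s <= t -> M * expR (alpha * s) <= M * expR (alpha * t).
Proof. by move=> st; rewrite ler_pM2l // ler_expR ler_wpM2l. Qed.

Lemma semigroup_norm_le t x : 0 <= t -> `|S t x| <= M * expR (alpha * t) * `|x|.
Proof.
move=> t0; have [S_bdd _] := S_C0.
by apply: le_trans (ler_opnorm (S_bdd t t0) x) _; rewrite ler_wpM2r ?S_growth.
Qed.

Lemma semigroup_increment s h x : 0 <= s -> 0 <= h ->
  S (s + h) x - S s x = S s (S h x - x).
Proof.
have [S_bdd [_ [S_add _]]] := S_C0 => s0 h0.
by rewrite is_linearB ?S_add //; case: (S_bdd s s0).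
Qed.

Lemma orbit_continuous x t : 0 < t -> {for t, continuous (S^~ x)}.
Proof.
move=> t0; have [_ [_ [_ S_right]]] := S_C0.
pose C := M * expR (alpha * t).
have C0 : 0 < C by rewrite mulr_gt0 ?expR_gt0.
have incr_le s h : 0 <= s <= t -> 0 <= h -> `|S (s + h) x - S s x| <= C * `|S h x - x|.
  move=> /andP[s0 st] h0; rewrite semigroup_increment //.
  by apply: le_trans (semigroup_norm_le _ s0) _; rewrite ler_wpM2r ?semigroup_growth_le.
apply/cvgrPdist_lt => e e0.
have /nbhs_ballP [δ δ0 Hδ] : \forall h \near 0^'+, `|x - S h x| < e / C.
  exact: (cvgrPdist_lt _ _).1 (S_right x) _ (divr_gt0 e0 C0).
have small h : 0 < h < δ -> C * `|S h x - x| < e.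
  move=> /andP[h0 hδ]; rewrite -ltr_pdivlMl // mulrC distrC.
  apply: Hδ => //=; rewrite -ball_normE /ball_ /= sub0r normrN gtr0_norm //.
near=> s.
have : ball t (Num.min δ t) s by near: s; apply: (nbhsx_ballx t); rewrite lt_min δ0.
rewrite -ball_normE /ball_ /= lt_min => /andP[tsδ tst].
have [st|ts] := ltrP s t.
- have s0 : 0 < s by move: tst; rewrite gtr0_norm ?subr_gt0 //; lra.
  have -> : S t x = S (s + (t - s)) x by rewrite addrC subrK.
  apply: le_lt_trans (incr_le _ _ _ _) (small _ _); rewrite ?ltW ?subr_gt0 //.
  by move: tsδ; rewrite gtr0_norm ?subr_gt0 // => ->; rewrite andbT.
- rewrite distrC; have [->|ts'] := eqVneq s t; first by rewrite subrr normr0.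
  have {ts'} ts : t < s by rewrite lt_neqAle eq_sym ts' ts.
  have -> : S s x = S (t + (s - t)) x by rewrite addrC subrK.
  apply: le_lt_trans (incr_le _ _ _ _) (small _ _); rewrite ?lexx ?ltW ?subr_gt0 //.
  by move: tsδ; rewrite distrC gtr0_norm ?subr_gt0 // => ->; rewrite andbT.
Unshelve. all: end_near. Qed.

Lemma orbit_continuous_within x a b : 0 <= a ->
  {within `[a, b], continuous (S^~ x)}.
Proof.
move=> a0; have [_ [S0 [_ S_right]]] := S_C0.
have b1 : 0 < `|b| + 1 by rewrite ltr_wpDl.
apply: (@continuous_subspaceW _ _ _ `[0, `|b| + 1]).
  by apply: subset_itv; rewrite bnd_simp // ler_wpDr // ler_norm.
apply/continuous_within_itvP => //; split.
- by move=> s; rewrite in_itv /= => /andP[s0 _]; apply: orbit_continuous.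
- by rewrite S0; apply: S_right.
- by apply: cvg_at_left_filter; apply: orbit_continuous.
Qed.


Variables (U : normedModType R) (B : X -> U).
Hypothesis B_bdd : bounded_linear B.

Lemma orbit_observation_continuous_within x a b : 0 <= a ->
  {within `[a, b], continuous (fun t => `|B (S t x)|)}.
Proof.
move=> a0; apply: (within_continuous_comp _ _ (fun y => `|B y|) _
  (@orbit_continuous_within x a b a0)) => y _.
by apply: continuous_comp; [case: B_bdd => _; apply | exact: norm_continuous].
Qed.

Lemma le_Rintegral_orbit_shift u a L T : 0 <= a -> 0 <= L -> L + a <= T ->
  \int[lebesgue_measure]_(t in `[0, L]) `|B (S t (S a u))| <=
  \int[lebesgue_measure]_(t in `[0, T]) `|B (S t u)|.
Proof.
have [_ [_ [S_add _]]] := S_C0 => a0 L0 LaT.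
have -> : \int[lebesgue_measure]_(t in `[0, L]) `|B (S t (S a u))| =
          \int[lebesgue_measure]_(t in `[0, L]) `|B (S (t + a) u)|.
  by apply: eq_Rintegral => t; rewrite inE /= in_itv /= => /andP[t0 _]; rewrite S_add.
rewrite (Rintegral_itv_shift (f := fun t => `|B (S t u)|)) //; last first.
  exact: orbit_observation_continuous_within.
by apply: le_Rintegral_subitv => //; apply: orbit_observation_continuous_within.
Qed.

Lemma le_Rintegral_orbit_observation_sqr u a L T : 0 <= a -> 0 <= L -> L + a <= T ->
  \int[lebesgue_measure]_(t in `[0, L]) `|B (S t (S a u))| ^+ 2 <=
  opnorm B * M * expR (alpha * T) * `|S a u| *
  \int[lebesgue_measure]_(t in `[0, T]) `|B (S t u)|.
Proof.
move=> a0 L0 LaT.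
have B_ge0 := opnorm_ge0 B_bdd.
set c := opnorm B * M * expR (alpha * T) * `|S a u|.
apply: le_trans (le_Rintegral_sqr (c := c) _ _) _.
- exact: orbit_observation_continuous_within.
- move=> t /andP[t0 tL]; rewrite normr_ge0 /=.
  apply: le_trans (ler_opnorm B_bdd _) _; rewrite /c -!mulrA ler_wpM2l // mulrA.
  apply: le_trans (semigroup_norm_le _ t0) _; rewrite ler_wpM2r ?semigroup_growth_le //.
  by apply: le_trans LaT; rewrite -[t]addr0 lerD.
- rewrite ler_wpM2l ?le_Rintegral_orbit_shift // !mulr_ge0 ?expR_ge0 //.
  exact: ltW.
Qed.

Variables (theta : R -> R) (d k : R).
Hypothesis theta_ge0 : forall t, 0 <= t -> 0 <= theta t.
Hypothesis theta_mono : forall s t, 0 <= s -> s <= t -> theta s <= theta t.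
Hypothesis observability : forall (L : R) (u0 : X), 0 < L ->
  `|S L u0| <= theta L * expR (d / L `^ k) *
    Num.sqrt (\int[lebesgue_measure]_(t in `[0, L]) `|B (S t u0)| ^+ 2).

Lemma observability_step u a L T : 0 <= a -> 0 < L -> L + a <= T ->
  `|S (L + a) u| <=
  (expR (- (2 * (d / L `^ k))) * `|S a u| +
   theta T ^+ 2 * (opnorm B * M * expR (alpha * T)) *
   \int[lebesgue_measure]_(t in `[0, T]) `|B (S t u)| * expR (4 * (d / L `^ k))) / 2.
Proof.
have [_ [_ [S_add _]]] := S_C0 => a0 L0 LaT.
rewrite (S_add _ _ _ (ltW L0) a0).
move: (observability (S a u) L0) => /le_trans; apply.
set G := \int[lebesgue_measure]_(t in `[0, T]) _.
set K := opnorm B * M * expR (alpha * T).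
have K0 : 0 <= K by rewrite !mulr_ge0 ?opnorm_ge0 ?expR_ge0 // ltW.
have T0 : 0 <= T by apply: le_trans LaT; rewrite addr_ge0 // ltW.
apply: (@le_trans _ _ (theta T * expR (d / L `^ k) * Num.sqrt (K * `|S a u| * G))).
  apply: ler_pM.
  - by rewrite mulr_ge0 ?expR_ge0 // theta_ge0 // ltW.
  - exact: sqrtr_ge0.
  - rewrite ler_wpM2r ?expR_ge0 // theta_mono // ?(ltW L0) //.
    by apply: le_trans LaT; rewrite lerDl.
  - by rewrite ler_wsqrtr // (le_Rintegral_orbit_observation_sqr _ a0 (ltW L0) LaT).
by apply: young_expR; rewrite ?theta_ge0 ?Rintegral_ge0.
Qed.

Lemma observability_L1 u T r : 0 <= d -> 0 < T -> 0 < r < 1 -> r `^ k = 2 / 3 ->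
  `|S T u| <= theta T ^+ 2 * (opnorm B * M * expR (alpha * T)) *
    \int[lebesgue_measure]_(t in `[0, T]) `|B (S t u)| *
    expR (4 * (d / (T * (1 - r)) `^ k)).
Proof.
move=> d0 T0 /andP[r_gt0 r_lt1] r_k.
pose t m := T * r ^+ m.
pose L m := T * (1 - r) * r ^+ m.
have L_gt0 m : 0 < L m by rewrite !mulr_gt0 ?exprn_gt0 // subr_gt0.
have t_ge0 m : 0 <= t m by rewrite mulr_ge0 ?exprn_ge0 // ltW.
have t_le m : t m <= T by rewrite /t ler_piMr ?exprn_ile1 ?ltW.
have L_t m : L m + t m.+1 = t m by rewrite /L /t exprS; ring.
pose nu m := d / L m `^ k.
have nuS m : nu m.+1 = 3 / 2 * nu m.
  rewrite /nu (_ : L m.+1 = r * L m); last by rewrite /L exprS; ring.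
  rewrite (powRM k (ltW r_gt0) (ltW (L_gt0 m))) r_k.
  by field; rewrite gt_eqF ?powR_gt0.
have S_t_le m : 0 <= `|S (t m) u| <= M * expR (alpha * T) * `|u|.
  rewrite normr_ge0 /=; apply: le_trans (semigroup_norm_le u (t_ge0 m)) _.
  by rewrite ler_wpM2r ?semigroup_growth_le.
rewrite [in leLHS](_ : T = t 0); last by rewrite /t expr0 mulr1.
rewrite [T * (1 - r)](_ : _ = L 0); last by rewrite /L expr0 mulr1.
apply: (le_geometric_recursion (f := fun m => `|S (t m) u|) nuS _
  (D := M * expR (alpha * T) * `|u|)) => //.
- by move=> m; rewrite -[in leLHS]L_t; apply: observability_step; rewrite ?L_t.
- by rewrite divr_ge0 ?powR_ge0.
- rewrite !mulr_ge0 ?opnorm_ge0 ?expR_ge0 ?theta_ge0 ?(ltW M_gt0) ?(ltW T0) //.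
  by apply: Rintegral_ge0 => s _.
Qed.

End Semigroup.

Unset Implicit Arguments.

Theorem proposition2p4 (R : realType) (d k : R) (hd : 0 < d) (hk : 0 < k) :
  exists N : R, 0 < N /\
  forall (X U : completeNormedModType R) (S : R -> X -> X) (B : X -> U)
         (M alpha : R) (theta : R -> R),
    hilbert_space X -> hilbert_space U ->
    C0_semigroup S ->
    0 < M -> 0 <= alpha ->
    (forall t, 0 <= t -> opnorm (S t) <= M * expR (alpha * t)) ->
    bounded_linear B ->
    (forall t, 0 <= t -> 0 <= theta t) ->
    (forall s t, 0 <= s -> s <= t -> theta s <= theta t) ->
    (forall (L : R) (u0 : X), 0 < L ->
       `|S L u0| <= theta L * expR (d / L `^ k) *
         Num.sqrt (Rintegral lebesgue_measure `[0, L]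
                     (fun t => `|B (S t u0)| ^+ 2))) ->
    forall (T : R) (u0 : X), 0 < T ->
      `|S T u0| <= (theta T ^+ 2 * opnorm B * M * expR (alpha * T))
                     * expR (N / T `^ k) *
         Rintegral lebesgue_measure `[0, T] (fun t => `|B (S t u0)|).
Proof.
have [r r01 r_k] : exists2 r : R, 0 < r < 1 & r `^ k = 2 / 3.
  by apply: exists_powR_root => //; lra.
have r_lt1 : r < 1 by case/andP: r01.
have q_gt0 : 0 < (1 - r) `^ k by rewrite powR_gt0 // subr_gt0.
exists (4 * d / (1 - r) `^ k); split; first by rewrite !divr_gt0 ?mulr_gt0.
move=> X U S B M alpha theta _ _ S_C0 M0 alpha0 S_growth B_bdd theta0 theta_mono obs
  T u T0.
rewrite [leRHS](_ : _ = theta T ^+ 2 * (opnorm B * M * expR (alpha * T)) *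
    Rintegral lebesgue_measure `[0, T] (fun t => `|B (S t u)|) *
    expR (4 * (d / (T * (1 - r)) `^ k))).
  exact: (observability_L1 S_C0 M0 alpha0 S_growth B_bdd theta0 theta_mono obs u
    (ltW hd) T0 r01 r_k).
have -> : 4 * d / (1 - r) `^ k / T `^ k = 4 * (d / (T * (1 - r)) `^ k).
  rewrite powRM ?(ltW T0) ?subr_ge0 ?(ltW r_lt1) //.
  by field; rewrite !gt_eqF // powR_gt0.
by ring.
Qed.
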